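(* Let $G$ be a finite simple graph with at least one edge and let $I=I(G)$ be its edge ideal. Then $v(I^{n+1})\le 2n+v(I)$ for all $n\ge 1$.
   Context: $K$ is a field and $S=K[x_1,\dots,x_t]$ is standard graded, with the vertices of $G$ being $x_1,\dots,x_t$. The edge ideal is $I(G)=\langle x_ix_j : \{x_i,x_j\}\text{ an edge of } G\rangle$. For a proper graded ideal $J$, the $v$-number is $v(J)=\min\{k\ge 0 : \exists f\in S_k,\ \mathcal P\in\operatorname{Ass}(S/J) \text{ with } (J:f)=\mathcal P\}$. *)

From HB Require Import structures.
From mathcomp Require Import all_boot all_order all_algebra.
From mathcomp Require Import mpoly.
Set Implicit Arguments. Unset Strict Implicit. Unset Printing Implicit Defensive.
Import GRing.Theory.
Local Open Scope ring_scope.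

Section Defs.
Variables (K : fieldType) (t : nat).
Local Notation S := {mpoly K[t]}.

Definition pset := S -> Prop.

Definition pset_eq (A B : pset) : Prop := forall f, A f <-> B f.

Definition ideal_gen (A : pset) : pset :=
  fun p => exists s : seq (S * S),
      (forall x, x \in s -> A x.2) /\ p = \sum_(x <- s) x.1 * x.2.

Definition ideal_mul (I J : pset) : pset :=
  ideal_gen (fun p => exists a b, I a /\ J b /\ p = a * b).

Fixpoint ideal_pow (I : pset) (m : nat) : pset :=
  match m with
  | 0%N => fun _ => True
  | m'.+1 => ideal_mul (ideal_pow I m') I
  end.

Definition colon (J : pset) (f : S) : pset := fun g => J (g * f).

Definition prime_ideal (P : pset) : Prop :=
  [/\ P 0,
      (forall a b, P a -> P b -> P (a + b)),
      (forall r a, P a -> P (r * a)),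
      ~ P 1
    & (forall a b, P (a * b) -> P a \/ P b)].

(* Associated primes of S/J: primes of the form (J : g). *)
Definition Ass (J : pset) (P : pset) : Prop :=
  prime_ideal P /\ exists g : S, pset_eq P (colon J g).

(* Homogeneous of (standard) degree k, i.e. f \in S_k (0 is in every S_k). *)
Definition homog_deg (k : nat) (f : S) : bool := f \is ishomog1 k mdeg.

Definition v_witness (J : pset) (k : nat) : Prop :=
  exists f : S, homog_deg k f /\
    exists P : pset, Ass J P /\ pset_eq (colon J f) P.

Definition is_v_number (J : pset) (v : nat) : Prop :=
  v_witness J v /\ forall k, v_witness J k -> (v <= k)%N.

Definition edge_ideal (E : rel 'I_t) : pset :=
  ideal_gen (fun p => exists i j : 'I_t, E i j /\ p = 'X_i * 'X_j).

End Defs.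

From mathcomp Require Import all_boot all_order all_algebra.
From mathcomp Require Import mpoly.
From mathcomp Require Import ring zify.
From Stdlib Require Import Classical.
From Stdlib Require Wf_nat.
Set Implicit Arguments. Unset Strict Implicit. Unset Printing Implicit Defensive.
Import GRing.Theory.
Local Open Scope ring_scope.

(* Let f be a witness for v(I): (I : f) is a prime P and f is not in I, so some
   monomial x^m0 of f is not in I, i.e. its support A is an independent set.
   Every variable in P is adjacent to A, and since the prime P contains I, the
   neighbourhood N(A) is a vertex cover.  Take an edge {u, a} with a in A (so
   u in N(A)) and the monomial x^M = x^m0 (x_u x_a)^n of degree v(I) + 2n.
   Then (I^(n+1) : x^M) is the prime ideal (x_v : v in N(A)): every element of
   I^(n+1) has degree at least n + 1 in the variables of the vertex cover N(A),
   x^M has degree exactly n in them, and for v in N(A) the monomial x_v x^m0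
   contains an edge. *)

Lemma ex_least_nat (P : nat -> Prop) k :
  P k -> exists w, (P w /\ forall j, P j -> (w <= j)%N) /\ (w <= k)%N.
Proof.
move=> Pk.
have [w [[Pw least] _]] := Wf_nat.dec_inh_nat_subset_has_unique_least_element P
  (fun j => classic (P j)) (ex_intro _ k Pk).
have le_w j : P j -> (w <= j)%N by move=> /least /leP.
by exists w; split; [split | apply: le_w].
Qed.

Section Monomials.
Variables (K : fieldType) (t : nat).
Local Notation S := {mpoly K[t]}.
Local Notation mono := 'X_{1..t}.

Definition msupp_all (Q : mono -> Prop) (p : S) : Prop :=
  forall m, m \in msupp p -> Q m.

Definition mnm_upclosed (Q : mono -> Prop) : Prop :=
  forall m1 m2 : mono, Q m2 -> Q (m1 + m2)%MM.

Lemma msupp_all0 Q : msupp_all Q 0.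
Proof. by move=> m; rewrite mcoeff_msupp mcoeff0 eqxx. Qed.

Lemma msupp_allD Q a b : msupp_all Q a -> msupp_all Q b -> msupp_all Q (a + b).
Proof. by move=> Ha Hb m /msuppD_le; rewrite mem_cat => /orP [/Ha|/Hb]. Qed.

Lemma msupp_allM Q r a : mnm_upclosed Q -> msupp_all Q a -> msupp_all Q (r * a).
Proof.
by move=> HQ Ha m /msuppM_le /allpairsP [[m1 m2]] /= [_ H2 ->]; apply/HQ/Ha.
Qed.

Lemma msupp_allZ Q c a : msupp_all Q a -> msupp_all Q (c *: a).
Proof. by move=> Ha m /msuppZ_le /Ha. Qed.

Lemma msupp_allX Q m : Q m -> msupp_all Q 'X_[m].
Proof. by move=> Hm m'; rewrite msuppX mem_seq1 => /eqP ->. Qed.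

Lemma msupp_all_sum Q (I : Type) (r : seq I) (P : pred I) (F : I -> S) :
  (forall i, P i -> msupp_all Q (F i)) -> msupp_all Q (\sum_(i <- r | P i) F i).
Proof.
move=> HF; elim: r => [|x r IH]; first by rewrite big_nil; apply: msupp_all0.
by rewrite big_cons; case: ifP => Px //; apply: msupp_allD (HF _ Px) IH.
Qed.

Lemma msupp_all_gen Q (A : pset K t) p : mnm_upclosed Q ->
  (forall q, A q -> msupp_all Q q) -> ideal_gen A p -> msupp_all Q p.
Proof.
move=> HQ HA [s [Hs ->]]; rewrite big_seq.
apply: msupp_all_sum => x /Hs /HA; exact: msupp_allM.
Qed.

Lemma msupp_split (Q : pred mono) p :
  exists p0 p1, [/\ p = p0 + p1, msupp_all (fun m => ~~ Q m) p0 & msupp_all Q p1].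
Proof.
exists (\sum_(m <- msupp p | ~~ Q m) p@_m *: 'X_[m]).
exists (\sum_(m <- msupp p | Q m) p@_m *: 'X_[m]).
split.
- by rewrite {1}(mpolyE p) (bigID Q) addrC.
- by apply: msupp_all_sum => m Qm; apply: msupp_allZ; apply: msupp_allX.
- by apply: msupp_all_sum => m Qm; apply: msupp_allZ; apply: msupp_allX.
Qed.

Lemma msupp_all_eq0 (Q Q' : mono -> Prop) p : (forall m, Q m -> ~ Q' m) ->
  msupp_all Q p -> msupp_all Q' p -> p = 0.
Proof.
move=> QQ' Hp Hp'; apply: msuppnil0; case eq_s: (msupp p) => [//|m s].
have Hm : m \in msupp p by rewrite eq_s mem_head.
by case: (QQ' _ (Hp _ Hm) (Hp' _ Hm)).
Qed.

Definition is_ideal (J : pset K t) : Prop :=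
  [/\ J 0, (forall a b, J a -> J b -> J (a + b)) & (forall r a, J a -> J (r * a))].

Lemma ideal_gen_is_ideal A : is_ideal (ideal_gen A).
Proof.
split.
- by exists [::]; rewrite big_nil.
- move=> a b [s [Hs ->]] [s' [Hs' ->]]; exists (s ++ s'); rewrite big_cat; split => //.
  by move=> x; rewrite mem_cat => /orP [/Hs|/Hs'].
- move=> r a [s [Hs ->]]; exists [seq (r * x.1, x.2) | x <- s]; split.
    by move=> x /mapP [y Hy ->] /=; apply: Hs.
  by rewrite big_map mulr_sumr; apply: eq_bigr => x _; rewrite mulrA.
Qed.

Lemma mem_ideal_gen (A : pset K t) p : A p -> ideal_gen A p.
Proof.
move=> Ap; exists [:: (1, p)]; split; first by move=> x; rewrite inE => /eqP ->.
by rewrite big_cons big_nil mul1r addr0.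
Qed.

Lemma ideal_pow_is_ideal (I : pset K t) k : is_ideal (ideal_pow I k).
Proof. by case: k => [|k]; [split | apply: ideal_gen_is_ideal]. Qed.

Lemma ideal_pow_mulr (I : pset K t) k a b :
  ideal_pow I k a -> I b -> ideal_pow I k.+1 (a * b).
Proof. by move=> Ha Hb; apply: mem_ideal_gen; exists a, b. Qed.

Lemma ideal_pow_exprn (I : pset K t) k e : I e -> ideal_pow I k (e ^+ k).
Proof.
by move=> Ie; elim: k => [|k IH] //; rewrite exprSr; apply: ideal_pow_mulr.
Qed.

Lemma colon_is_ideal (J : pset K t) f : is_ideal J -> is_ideal (colon J f).
Proof.
case=> J0 JD JM; split; rewrite /colon.
- by rewrite mul0r.
- by move=> a b Ha Hb; rewrite mulrDl; apply: JD.
- by move=> r a Ha; rewrite -mulrA; apply: JM.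
Qed.

Lemma ideal_msupp (J : pset K t) p : is_ideal J ->
  (forall m, m \in msupp p -> J 'X_[m]) -> J p.
Proof.
move=> [J0 JD JM] HX; rewrite (mpolyE p) big_seq.
by apply: (big_ind J) => // m Hm; rewrite -mul_mpolyC; apply/JM/HX.
Qed.

Lemma ideal_mpolyX_le (J : pset K t) m1 m : is_ideal J ->
  (m1 <= m)%MM -> J 'X_[m1] -> J 'X_[m].
Proof. by case=> _ _ JM le_m J1; rewrite -(submK le_m) mpolyXD; apply: JM. Qed.

Lemma pset_eq_sym (P Q : pset K t) : pset_eq P Q -> pset_eq Q P.
Proof. by move=> PQ p; apply: iff_sym. Qed.

Lemma prime_ideal_eq (P Q : pset K t) : pset_eq P Q -> prime_ideal P -> prime_ideal Q.
Proof.
move=> PQ [P0 PD PM P1 Pmul]; split.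
- exact/PQ.
- by move=> a b /PQ Ha /PQ Hb; apply/PQ/PD.
- by move=> r a /PQ Ha; apply/PQ/PM.
- by move/PQ.
- by move=> a b /PQ /Pmul [/PQ|/PQ]; [left | right].
Qed.

Section VarDegree.
Variable V : pred 'I_t.

Definition vdeg (m : mono) : nat := (\sum_(i | V i) m i)%N.

(* [vdeg_ge V 1] is the prime ideal generated by the variables x_i, i in V. *)
Definition vdeg_ge (k : nat) (p : S) : Prop := msupp_all (fun m => (k <= vdeg m)%N) p.

Lemma vdegD m1 m2 : vdeg (m1 + m2)%MM = (vdeg m1 + vdeg m2)%N.
Proof. by rewrite /vdeg -big_split; apply: eq_bigr => i _; rewrite mnmDE. Qed.

Lemma vdegU x : vdeg U_(x)%MM = V x.
Proof.
rewrite /vdeg big_mkcond (bigD1 x) //= mnm1E eqxx big1 ?addn0 => [|i ni].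
  by case: (V x).
by rewrite mnm1E eq_sym (negbTE ni); case: (V i).
Qed.

Lemma vdegMn m k : vdeg (m *+ k)%MM = (vdeg m * k)%N.
Proof. by rewrite /vdeg big_distrl; apply: eq_bigr => i _; rewrite mulmnE. Qed.

Lemma vdeg_eq0 (m : mono) : (forall i, V i -> m i = 0%N) -> vdeg m = 0%N.
Proof. by move=> m_eq0; rewrite /vdeg big1. Qed.

Lemma vdeg_gt0 (m : mono) : (0 < vdeg m)%N -> exists2 i, V i & (0 < m i)%N.
Proof.
case: (pickP [pred i | V i && (0 < m i)%N]) => [i /andP [Vi mi] _ | none].
  by exists i.
rewrite vdeg_eq0 // => i Vi; apply/eqP; move: (none i) => /=.
by rewrite Vi lt0n => /negbT /negbNE.
Qed.

Lemma vdeg_ge_upclosed k : mnm_upclosed (fun m => (k <= vdeg m)%N).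
Proof. by move=> m1 m2 le_k; rewrite vdegD (leq_trans le_k (leq_addl _ _)). Qed.

Lemma vdeg_geM k1 k2 a b : vdeg_ge k1 a -> vdeg_ge k2 b -> vdeg_ge (k1 + k2) (a * b).
Proof.
move=> Ha Hb m /msuppM_le /allpairsP [[m1 m2]] /= [H1 H2 ->].
by rewrite vdegD leq_add ?Ha ?Hb.
Qed.

Lemma vdeg_ge1_prime : prime_ideal (vdeg_ge 1).
Proof.
split.
- exact: msupp_all0.
- by move=> a b; apply: msupp_allD.
- by move=> r a; apply: msupp_allM; apply: vdeg_ge_upclosed.
- move/(_ 0%MM); rewrite -mpolyX0 msuppX mem_seq1 eqxx => /(_ isT).
  by rewrite vdeg_eq0 // => i _; rewrite mnm0E.
move=> a b Hab.
have [a0 [a1 [eq_a Ha0 Ha1]]] := msupp_split (fun m => 0 < vdeg m)%N a.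
have [b0 [b1 [eq_b Hb0 Hb1]]] := msupp_split (fun m => 0 < vdeg m)%N b.
have ab0 : a0 * b0 = 0.
  apply: (msupp_all_eq0 (Q := fun m => ~~ (0 < vdeg m)%N) (Q' := fun m => 0 < vdeg m)%N).
  - by move=> m /negP.
  - move=> m /msuppM_le /allpairsP [[m1 m2]] /= [H1 H2 ->].
    by rewrite vdegD addn_gt0 negb_or Ha0 ?Hb0.
  have -> : a0 * b0 = a * b + (-1) * (b * a1 + a0 * b1) by rewrite eq_a eq_b; ring.
  have up1 := @vdeg_ge_upclosed 1%N.
  by apply: msupp_allD => //; apply: msupp_allM => //; apply: msupp_allD; apply: msupp_allM.
have /orP [/eqP a00 | /eqP b00] : (a0 == 0) || (b0 == 0) by rewrite -mulf_eq0 ab0.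
- by left; rewrite eq_a a00 add0r.
- by right; rewrite eq_b b00 add0r.
Qed.

End VarDegree.
End Monomials.

Section EdgeIdeal.
Variables (K : fieldType) (t : nat) (E : rel 'I_t).
Hypothesis Esym : forall i j : 'I_t, E i j = E j i.
Hypothesis Eirr : forall i : 'I_t, E i i = false.
Local Notation S := {mpoly K[t]}.
Local Notation mono := 'X_{1..t}.
Local Notation I := (@edge_ideal K t E).

Definition has_edge (m : mono) : bool :=
  [exists i, exists j, [&& E i j, (0 < m i)%N & (0 < m j)%N]].

Definition nbhd (m : mono) : pred 'I_t := fun v => [exists b, E v b && (0 < m b)%N].

Lemma edge_ideal_is_ideal : is_ideal I.
Proof. exact: ideal_gen_is_ideal. Qed.

Lemma mem_edge_ideal i j : E i j -> I ('X_i * 'X_j).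
Proof. by move=> Eij; apply: mem_ideal_gen; exists i, j. Qed.

Lemma edge_ideal_msupp p : I p -> msupp_all has_edge p.
Proof.
apply: msupp_all_gen.
  move=> m1 m2 /existsP [i /existsP [j /and3P [Eij Hi Hj]]].
  apply/existsP; exists i; apply/existsP; exists j; rewrite Eij !mnmDE.
  by rewrite (leq_trans Hi (leq_addl _ _)) (leq_trans Hj (leq_addl _ _)).
move=> q [i [j [Eij ->]]]; rewrite -mpolyXD; apply: msupp_allX.
apply/existsP; exists i; apply/existsP; exists j; by rewrite Eij !mnmDE !mnm1E !eqxx !addn_gt0 orbT.
Qed.

Lemma msupp_edge_ideal p : msupp_all has_edge p -> I p.
Proof.
move=> Hp; apply: ideal_msupp; first exact: edge_ideal_is_ideal.
move=> m /Hp /existsP [i /existsP [j /and3P [Eij Hi Hj]]].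
have nij : i != j by apply: contraTneq Eij => ->; rewrite Eirr.
apply: (ideal_mpolyX_le edge_ideal_is_ideal (m1 := U_(i) + U_(j))%MM).
  apply/mnm_lepP => k; rewrite mnmDE !mnm1E; move: nij Hi Hj.
  by case: (i =P k) => [->|_]; case: (j =P k) => [->|_]; rewrite ?eqxx ?addn0.
by rewrite mpolyXD; apply: mem_edge_ideal.
Qed.

Lemma ideal_pow_edge_mpolyX k u a v b : E u a -> E v b ->
  ideal_pow I k.+1 'X_[(U_(u) + U_(a)) *+ k + (U_(v) + U_(b))].
Proof.
move=> Eua Evb; rewrite mpolyXD -mpolyXn !mpolyXD.
by apply: ideal_pow_mulr; [apply: ideal_pow_exprn|]; apply: mem_edge_ideal.
Qed.

Section VertexCover.
Variable V : pred 'I_t.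
Hypothesis cover : forall i j, E i j -> V i || V j.

Lemma edge_ideal_vdeg_ge p : I p -> vdeg_ge V 1 p.
Proof.
apply: msupp_all_gen; first exact: vdeg_ge_upclosed.
move=> q [i [j [Eij ->]]]; rewrite -mpolyXD; apply: msupp_allX.
by rewrite vdegD !vdegU; move: (cover Eij); case: (V i); case: (V j).
Qed.

Lemma ideal_pow_vdeg_ge k p : ideal_pow I k p -> vdeg_ge V k p.
Proof.
elim: k p => [|k IH] p /=; first by move=> _ m _.
apply: msupp_all_gen; first exact: vdeg_ge_upclosed.
move=> q [a [b [Ha [Hb ->]]]]; rewrite -addn1.
by apply: vdeg_geM; [apply: IH | apply: edge_ideal_vdeg_ge].
Qed.

End VertexCover.

Section Independent.
Variable m0 : mono.
Hypothesis indep : ~~ has_edge m0.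

Lemma nbhd_independent_eq0 v : nbhd m0 v -> m0 v = 0%N.
Proof.
move=> /existsP [b /andP [Evb Hb]]; apply/eqP; rewrite -leqn0 leqNgt.
by apply: contra indep => Hv; apply/existsP; exists v; apply/existsP; exists b; rewrite Evb Hv.
Qed.

Variables (u a : 'I_t) (n : nat).
Hypotheses (Eua : E u a) (Ha : (0 < m0 a)%N).

Lemma vdeg_nbhd_edge_pow : vdeg (nbhd m0) (m0 + (U_(u) + U_(a)) *+ n)%MM = n.
Proof.
have Nu : nbhd m0 u by apply/existsP; exists a; rewrite Eua.
have Na : nbhd m0 a = false.
  by case Na : (nbhd m0 a) => //; move: Ha; rewrite (nbhd_independent_eq0 Na).
have vdeg_m0 : vdeg (nbhd m0) m0 = 0%N.
  by apply: vdeg_eq0 => v; apply: nbhd_independent_eq0.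
by rewrite vdegD vdegMn vdegD !vdegU Nu Na vdeg_m0 /= add0n mul1n.
Qed.

Hypothesis cover : forall i j, E i j -> nbhd m0 i || nbhd m0 j.

Lemma colon_nbhd_edge_pow :
  pset_eq (colon (ideal_pow I n.+1) 'X_[m0 + (U_(u) + U_(a)) *+ n])
          (vdeg_ge (nbhd m0) 1).
Proof.
set M := (m0 + _)%MM; move=> g; split.
  move=> /(ideal_pow_vdeg_ge cover) Hg m Hm.
  have := Hg (M + m)%MM; rewrite mcoeff_msupp mcoeffMX -mcoeff_msupp => /(_ Hm).
  by rewrite vdegD vdeg_nbhd_edge_pow -addn1 leq_add2l.
move=> Hg; apply: ideal_msupp; first exact/colon_is_ideal/ideal_pow_is_ideal.
move=> m /Hg /vdeg_gt0 [v Nv Hv]; rewrite /colon -mpolyXD.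
have [b /andP [Evb Hb]] := existsP Nv.
apply: (ideal_mpolyX_le (ideal_pow_is_ideal _ _) _ (ideal_pow_edge_mpolyX n Eua Evb)).
have le_v : (U_(v) <= m)%MM by rewrite lep1mP -lt0n.
have le_b : (U_(b) <= m0)%MM by rewrite lep1mP -lt0n.
apply/mnm_lepP => i; move: (mnm_lepP le_v i) (mnm_lepP le_b i).
rewrite /M !mnmDE; lia.
Qed.

End Independent.

Lemma exists_independent_msupp f :
  ~ I f -> exists2 m0, m0 \in msupp f & ~~ has_edge m0.
Proof.
move=> nIf; case: (boolP (has (fun m => ~~ has_edge m) (msupp f))).
  by move=> /hasP [m0 Hm0 indep]; exists m0.
by move=> /hasPn indep; case: nIf; apply: msupp_edge_ideal => m /indep /negbNE.
Qed.

Section Witness.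
Variables (f : S) (m0 : mono).
Hypotheses (Hm0 : m0 \in msupp f) (indep : ~~ has_edge m0).

Lemma colon_var_nbhd c : colon I f 'X_c -> nbhd m0 c.
Proof.
rewrite /colon mulrC => /edge_ideal_msupp Hc.
have /existsP [i /existsP [j /and3P [Eij Hi Hj]]] : has_edge (U_(c) + m0)%MM.
  by apply: Hc; rewrite mcoeff_msupp mcoeffMX -mcoeff_msupp.
rewrite !mnmDE !mnm1E in Hi Hj.
have [eci|nci] := eqVneq c i.
  have ncj : c != j by apply: contraTneq Eij => ecj; rewrite -ecj -eci Eirr.
  by apply/existsP; exists j; rewrite eci Eij; move: Hj; rewrite (negbTE ncj).
have [ecj|ncj] := eqVneq c j.
  by apply/existsP; exists i; rewrite ecj Esym Eij; move: Hi; rewrite (negbTE nci).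
move: Hi Hj; rewrite (negbTE nci) (negbTE ncj) => Hi Hj.
by case/negP: indep; apply/existsP; exists i; apply/existsP; exists j; rewrite Eij Hi Hj.
Qed.

Lemma nbhd_vertex_cover : prime_ideal (colon I f) ->
  forall i j, E i j -> nbhd m0 i || nbhd m0 j.
Proof.
case=> _ _ _ _ Pmul i j Eij.
have [_ _ IM] := edge_ideal_is_ideal.
have : colon I f ('X_i * 'X_j) by rewrite /colon mulrC; apply/IM/mem_edge_ideal.
by case/Pmul => /colon_var_nbhd ->; rewrite ?orbT.
Qed.

End Witness.
End EdgeIdeal.

Theorem proposition4p15 (K : fieldType) (t : nat) (E : rel 'I_t)
  (Esym : forall i j : 'I_t, E i j = E j i) (Eirr : forall i : 'I_t, E i i = false)
  (Hedge : exists i j : 'I_t, E i j)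
  (vI : nat) (HvI : is_v_number (@edge_ideal K t E) vI)
  (n : nat) (Hn : (1 <= n)%N) :
  exists w : nat,
    is_v_number (ideal_pow (@edge_ideal K t E) n.+1) w /\ (w <= 2 * n + vI)%N.
Proof.
(* The argument also works for n = 0. *)
have [[f [homf [P [[primeP _] fP]]]] _] := HvI.
have prime_colon := prime_ideal_eq (pset_eq_sym fP) primeP.
have nIf : ~ edge_ideal E f.
  by case: prime_colon => _ _ _ + _ If; apply; rewrite /colon mul1r.
have [m0 Hm0 indep] := exists_independent_msupp Eirr nIf.
have cover := nbhd_vertex_cover Esym Eirr Hm0 indep prime_colon.
have [u [a [Eua Ha]]] : exists u a, E u a /\ (0 < m0 a)%N.
  case: Hedge => i [j /cover /orP [] /existsP [b /andP [Eb mb]]];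
    by [exists i, b | exists j, b].
set M := (m0 + (U_(u) + U_(a)) *+ n)%MM.
have colonM := colon_nbhd_edge_pow (K := K) indep n Eua Ha cover.
have witness : v_witness (ideal_pow (@edge_ideal K t E) n.+1) (mdeg M).
  exists 'X_[M]; split; first by rewrite /homog_deg dhomogX.
  exists (vdeg_ge (nbhd E m0) 1%N); split=> //.
  by split; [apply: vdeg_ge1_prime | exists 'X_[M]; apply: pset_eq_sym].
have [w [vw le_w]] := ex_least_nat witness.
exists w; split=> //; apply: leq_trans le_w _.
by rewrite /M mdegD mdegMn mdegD !mdeg1 (dhomog_mf homf Hm0) addnC.
Qed.
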